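(* Let $\mathbf b\in\mathcal B$ and $u\in M$ with $u-\mathbf b\in\mathbb Z A_+$, and write $\mathbf b=\sum_{j=1}^mv_j\mathbf a_j$ with $v_j\in[0,1)$. Let $s_0\in\{0,1,\dots,\ell_0-1\}$ be the unique element with $u+s_0\mathbf a_0\equiv\mathbf b\pmod{\mathbb ZA}$ and let $s_1,\dots,s_m\in\mathbb Z$ be the unique integers with $u+s_0\mathbf a_0=\mathbf b-\sum_{j=1}^ms_j\mathbf a_j$. Then \[G^{(\mathbf b)}_u(\lambda)=\Big(\prod_{j=1}^m[-v_j]_{s_j}\prod_{j=1}^m\ell_j^{s_j}\Big)\frac{(-\ell_0)^{s_0}}{s_0!}F^{(\mathbf b)}_u(\lambda),\] where \[F^{(\mathbf b)}_u(\lambda)=\lambda^{s_0}\sum_{s=0}^\infty\frac{\prod_{j=1}^m\prod_{\sigma=0}^{\ell_j-1}\big(\frac{v_j-s_j+\sigma}{\ell_j}\big)_s}{\prod_{t=1}^{\ell_0}\big(\frac{s_0+t}{\ell_0}\big)_s}\lambda^{s\ell_0}.\]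
   Context: Let $A=\{\mathbf a_1,\dots,\mathbf a_m\}\subseteq\mathbb Z^n$ be linearly independent over $\mathbb R$, $\mathbf a_0\in\mathbb Z^n$, and $\ell_0,\ell_1,\dots,\ell_m$ positive integers with gcd $1$ such that $\ell_0\mathbf a_0=\sum_{j=1}^m\ell_j\mathbf a_j$ and $\ell_0=\sum_{j=1}^m\ell_j$. Put $A_+=A\cup\{\mathbf a_0\}$; $\mathbb ZA$ and $\mathbb ZA_+$ denote the subgroups of $\mathbb Z^n$ generated by $A$, $A_+$. Let $V$ be the real span of $A$, $V_{\mathbb Z}=V\cap\mathbb Z^n$, $C(A)$ the closed real cone generated by $A$, $M=V_{\mathbb Z}\cap C(A)$. Let $P(A)=\{\sum_jc_j\mathbf a_j:0\le c_j<1\}$ and $\mathcal B=V_{\mathbb Z}\cap P(A)$. Pochhammer symbol: $(a)_s=a(a+1)\cdots(a+s-1)$, $(a)_0=1$. For $z\in\mathbb C$, $l\in\mathbb Z$: $[z]_0=1$, $[z]_l=1/((z+1)\cdots(z+l))$ for $l>0$, $[z]_l=z(z-1)\cdots(z+l+1)$ for $l<0$. For $\mathbf b=\sum_jv_j\mathbf a_j\in\mathcal B$ ($v_j\in[0,1)$) and $u\in M$, let $g^{(\mathbf b)}_u=\prod_{j=1}^m[-v_j]_{s_j}\ell_j^{s_j}$ if $u=\sum_j(v_j-s_j)\mathbf a_j$ with all $s_j\in\mathbb Z_{\le0}$, and $g^{(\mathbf b)}_u=0$ otherwise; and $G^{(\mathbf b)}_u(\lambda)=\sum_{s\ge0}g^{(\mathbf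 b)}_{u+s\mathbf a_0}\frac{(-\ell_0\lambda)^s}{s!}\in\mathbb C[[\lambda]]$. *)

From HB Require Import structures.
From mathcomp Require Import all_boot all_order all_algebra.
From mathcomp Require Import boolp reals.
Set Implicit Arguments. Unset Strict Implicit. Unset Printing Implicit Defensive.
Import Order.TTheory GRing.Theory Num.Theory.
Local Open Scope ring_scope.

Section Defs.
Variable R : realType.

(* Formal power series over R, represented by their coefficient sequences:
   f : fps  stands for  \sum_k f k * lambda^k. *)
Definition fps := nat -> R.

Definition poch (a : R) (s : nat) : R := \prod_(i < s) (a + i%:R).

(* [z]_l : [z]_0 = 1, [z]_l = 1/((z+1)...(z+l)) for l > 0,
   [z]_l = z(z-1)...(z+l+1) for l < 0 (Negz k = -(k+1)). *)
Definition bracket (z : R) (l : int) : R :=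
  match l with
  | Posz k => (\prod_(i < k) (z + i.+1%:R))^-1
  | Negz k => \prod_(i < k.+1) (z - i%:R)
  end.

Definition rvec n (x : 'rV[int]_n) : 'rV[R]_n := map_mx (fun z : int => z%:~R) x.

(* g^(b)_w, where b = \sum_j v_j a_j : if w = \sum_j (v_j - t_j) a_j with all
   t_j in Z_{<=0} then \prod_j [-v_j]_{t_j} l_j^{t_j}, else 0.  (By linear
   independence of A such t is unique; it is picked by choice.) *)
Definition gcoef n m (a : 'I_m -> 'rV[int]_n) (l : 'I_m -> nat)
    (v : 'I_m -> R) (w : 'rV[int]_n) : R :=
  match pselect (exists t : 'I_m -> int, (forall j, t j <= 0) /\
            rvec w = \sum_(j < m) (v j - (t j)%:~R) *: rvec (a j)) with
  | left H => let t := projT1 (cid H) in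
              \prod_(j < m) (bracket (- v j) (t j) * (l j)%:R ^ (t j))
  | right _ => 0
  end.

Definition Gser n m (a0 : 'rV[int]_n) (a : 'I_m -> 'rV[int]_n) (l0 : nat)
    (l : 'I_m -> nat) (v : 'I_m -> R) (u : 'rV[int]_n) : fps :=
  fun s => gcoef a l v (u + a0 *+ s) * (- l0%:R) ^+ s / s`!%:R.

(* F^(b)_u(lambda) = lambda^{s0} \sum_s c_s lambda^{s l0} with
   c_s = \prod_j \prod_{sigma<l_j} ((v_j - s_j + sigma)/l_j)_s
         / \prod_{t=1}^{l0} ((s0+t)/l0)_s ;
   its coefficient of lambda^k is c_((k-s0)/l0) if k = s0 + s l0, else 0. *)
Definition Fser m (l0 : nat) (l : 'I_m -> nat) (v : 'I_m -> R)
    (s0 : nat) (s : 'I_m -> int) : fps :=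
  fun k =>
    if (s0 <= k)%N && (l0 %| k - s0)%N then
      let e := ((k - s0) %/ l0)%N in
      (\prod_(j < m) \prod_(sigma < l j)
          poch ((v j - (s j)%:~R + sigma%:R) / (l j)%:R) e)
      / \prod_(t < l0) poch ((s0 + t.+1)%:R / l0%:R) e
    else 0.

End Defs.

(* Work in coordinates with respect to the free family A.  Since
   l0 a0 = \sum_j l_j a_j, the point u + k a0 has coordinates
   v_j - s_j + (k - s0) l_j / l0.  It has the shape \sum_j (v_j - t_j) a_j with
   integral t_j iff l0 divides every (k - s0) l_j, i.e. (gcd(l0, l_j) = 1 and
   s0 < l0) iff k = s0 + e l0 with e >= 0; then t_j = s_j - e l_j, and s_j <= 0
   because u lies in the cone C(A).  So G is supported on s0 + l0 N, and there
   Gauss' multiplication formula (x)_(e l) = l^(e l) \prod_(i<l) ((x+i)/l)_e,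
   applied to the brackets [-v_j]_(s_j - e l_j) and to (s0 + e l0)!, yields F;
   the powers of l0 and the signs cancel because \sum_j l_j = l0. *)

From HB Require Import structures.
From mathcomp Require Import all_boot all_order all_algebra.
From mathcomp Require Import boolp reals.
From mathcomp Require Import ring lra zify.
Set Implicit Arguments. Unset Strict Implicit. Unset Printing Implicit Defensive.
Import Order.TTheory GRing.Theory Num.Theory.
Local Open Scope ring_scope.

Lemma free_coord_eq (K : fieldType) (vT : vectType K) m (V : 'I_m -> vT)
    (c d : 'I_m -> K) :
  free [seq V j | j <- enum 'I_m] ->
  \sum_(j < m) c j *: V j = \sum_(j < m) d j *: V j -> c =1 d.
Proof.
pose X := [tuple V j | j < m].
have XE (i : 'I_m) : X`_i = V i by rewrite -tnth_nth tnth_mktuple.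
have -> : [seq V j | j <- enum 'I_m] = X by rewrite /= enumT unlock.
move=> freeX E j.
have sumE (k : 'I_m -> K) : \sum_(i < m) k i *: V i = \sum_(i < m) k i *: X`_i.
  by apply: eq_bigr => i _; rewrite XE.
by rewrite -(coord_sum_free c j freeX) -(coord_sum_free d j freeX) -!sumE E.
Qed.

Lemma Gauss_dvdl_big_gcdn (l0 D : nat) m (l : 'I_m -> nat) :
  coprime l0 (\big[gcdn/0%N]_(j < m) l j) ->
  (forall j, l0 %| D * l j)%N -> (l0 %| D)%N.
Proof.
move=> co dvd; rewrite -(Gauss_dvdl _ co).
have -> : (D * \big[gcdn/0%N]_(j < m) l j = \big[gcdn/0%N]_(j < m) (D * l j))%N.
  by elim/big_rec2: _ => [|i y1 y2 _ <-]; rewrite ?muln0 // muln_gcdr.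
by elim/big_ind: _ => //= x y dx dy; rewrite dvdn_gcd dx dy.
Qed.

Section RealVectors.
Variables (R : realType) (n : nat).

Lemma rvec_is_zmod_morphism : zmod_morphism (@rvec R n).
Proof. by move=> x y; rewrite /rvec map_mxB. Qed.

HB.instance Definition _ :=
  GRing.isZmodMorphism.Build _ _ (@rvec R n) rvec_is_zmod_morphism.

Lemma rvecMn (x : 'rV[int]_n) k : rvec R (x *+ k) = k%:R *: rvec R x.
Proof. by rewrite raddfMn scaler_nat. Qed.

Lemma rvecMz (x : 'rV[int]_n) k : rvec R (x *~ k) = k%:~R *: rvec R x.
Proof. by rewrite raddfMz scaler_int. Qed.

End RealVectors.

Section Pochhammer.
Variable R : realType.
Implicit Types x z : R.

Lemma poch_addn x N K : poch x (N + K) = poch x N * poch (x + N%:R) K.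
Proof.
rewrite /poch big_split_ord /=; congr (_ * _).
by apply: eq_bigr => i _; rewrite natrD addrA.
Qed.

Lemma poch_gt0 x e : 0 < x -> 0 < poch x e.
Proof. by move=> x_gt0; apply: prodr_gt0 => i _; apply: ltr_wpDr. Qed.

Lemma poch_muln x e l : (0 < l)%N ->
  poch x (e * l) = l%:R ^+ (e * l) * \prod_(i < l) poch ((x + i%:R) / l%:R) e.
Proof.
move=> l_gt0; have lR : l%:R != 0 :> R by rewrite pnatr_eq0 -lt0n.
elim: e => [|e IH].
  by rewrite mul0n /poch big_ord0 expr0 mul1r big1 // => i _; rewrite big_ord0.
have pochS (y : R) : poch y e.+1 = poch y e * (y + e%:R).
  by rewrite /poch big_ord_recr.
rewrite mulSnr poch_addn IH exprD.
under [in RHS]eq_bigr => i _ do rewrite pochS.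
rewrite big_split /= -!mulrA; congr (_ * _).
rewrite [in RHS]mulrCA; congr (_ * _).
rewrite -[in X in l%:R ^+ X](card_ord l) -prodr_const -big_split /=.
by apply: eq_bigr => i _; rewrite natrM; field.
Qed.

Lemma fact_addn_poch s0 K : ((s0 + K)`!)%:R = s0`!%:R * poch s0.+1%:R K :> R.
Proof.
elim: K => [|K IH]; first by rewrite addn0 /poch big_ord0 mulr1.
by rewrite addnS factS natrM IH /poch big_ord_recr /= -addSn natrD; ring.
Qed.

Lemma bracketN_poch x N : bracket (- x) (- N%:Z) = (-1) ^+ N * poch x N.
Proof.
have -> : bracket (- x) (- N%:Z) = \prod_(i < N) (- x - i%:R).
  by case: N => [|N]; rewrite /bracket /= ?big_ord0 ?invr1.
rewrite /poch -[in (-1) ^+ N](card_ord N) -prodrN.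
by apply: eq_bigr => i _; rewrite opprD.
Qed.

Lemma bracket_shift (x : R) (t : int) (e l : nat) : t <= 0 -> (0 < l)%N ->
  bracket (- x) (t - (e * l)%N%:Z) * l%:R ^ (t - (e * l)%N%:Z) =
  bracket (- x) t * l%:R ^ t *
  ((-1) ^+ (e * l) * \prod_(i < l) poch ((x - t%:~R + i%:R) / l%:R) e).
Proof.
move=> t_le0 l_gt0; have lR : l%:R != 0 :> R by rewrite pnatr_eq0 -lt0n.
have [N ->] : exists N : nat, t = - N%:Z by exists `|t|%N; lia.
have -> : - N%:Z - (e * l)%N%:Z = - (N + e * l)%N%:Z by lia.
rewrite !bracketN_poch poch_addn poch_muln // -!invr_expz intrN opprK.
rewrite -[N%:~R]/(N%:R : R) exprD exprzD_nat -!exprnP.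
by field; rewrite !expf_neq0.
Qed.

Lemma exp_fact_shift (l0 s0 e : nat) : (0 < l0)%N ->
  (- l0%:R) ^+ (s0 + e * l0) / (s0 + e * l0)`!%:R =
  (- l0%:R) ^+ s0 / s0`!%:R *
  ((-1) ^+ (e * l0) / \prod_(i < l0) poch ((s0 + i.+1)%:R / l0%:R) e) :> R.
Proof.
move=> l0_gt0; have l0R : l0%:R != 0 :> R by rewrite pnatr_eq0 -lt0n.
have pochR_neq0 : \prod_(i < l0) poch ((s0 + i.+1)%:R / l0%:R) e != 0 :> R.
  apply/prodf_neq0 => i _; apply/lt0r_neq0/poch_gt0.
  by rewrite divr_gt0 ?ltr0n ?addnS.
rewrite fact_addn_poch poch_muln //.
under eq_bigr => i _ do rewrite -natrD addSnnS.
rewrite exprD exprNn [(- l0%:R) ^+ (e * l0)]exprNn.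
by field; rewrite pochR_neq0 !expf_neq0 // pnatr_eq0 -lt0n fact_gt0.
Qed.

End Pochhammer.

Section Coefficients.
Variables (R : realType) (n m : nat) (a : 'I_m -> 'rV[int]_n) (l : 'I_m -> nat).
Variable v : 'I_m -> R.

Lemma gcoefE (w : 'rV[int]_n) (t : 'I_m -> int) :
  free [seq rvec R (a j) | j <- enum 'I_m] -> (forall j, t j <= 0) ->
  rvec R w = \sum_(j < m) (v j - (t j)%:~R) *: rvec R (a j) ->
  gcoef a l v w = \prod_(j < m) (bracket (- v j) (t j) * (l j)%:R ^ (t j)).
Proof.
move=> freeA t_le0 wE; rewrite /gcoef.
case: pselect => [ex | []]; last by exists t.
case: (cid ex) => t' [_ wE'] /=; apply: eq_bigr => j _.
have := free_coord_eq freeA (etrans (esym wE') wE) j.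
by move=> /addrI/oppr_inj/intr_inj ->.
Qed.

Lemma gcoef_out (w : 'rV[int]_n) :
  ~ (exists t : 'I_m -> int, (forall j, t j <= 0) /\
       rvec R w = \sum_(j < m) (v j - (t j)%:~R) *: rvec R (a j)) ->
  gcoef a l v w = 0.
Proof. by rewrite /gcoef; case: pselect. Qed.

End Coefficients.

Section Shift.
Variables (R : realType) (n m : nat).
Variables (a : 'I_m -> 'rV[int]_n) (a0 : 'rV[int]_n).
Variables (l0 : nat) (l : 'I_m -> nat).
Hypothesis freeA : free [seq rvec R (a j) | j <- enum 'I_m].
Hypotheses (l0_gt0 : (0 < l0)%N) (l_gt0 : forall j, (0 < l j)%N).
Hypothesis coprime_l : coprime l0 (\big[gcdn/0%N]_(j < m) l j).
Hypothesis a0_rel : a0 *+ l0 = \sum_(j < m) a j *+ l j.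
Hypothesis l0_sum : l0 = (\sum_(j < m) l j)%N.

Let l0R : l0%:R != 0 :> R. Proof. by rewrite pnatr_eq0 -lt0n. Qed.

Lemma rvec_a0 : rvec R a0 = \sum_(j < m) ((l j)%:R / l0%:R) *: rvec R (a j).
Proof.
apply: (scalerI l0R); rewrite -rvecMn a0_rel raddf_sum scaler_sumr.
by apply: eq_bigr => j _ /=; rewrite rvecMn scalerA mulrCA divff // mulr1.
Qed.

Variables (v : 'I_m -> R) (u : 'rV[int]_n) (s0 : nat) (s : 'I_m -> int).
Hypothesis coord_s0 :
  rvec R (u + a0 *+ s0) = \sum_(j < m) (v j - (s j)%:~R) *: rvec R (a j).

Lemma rvec_shift (k : nat) :
  rvec R (u + a0 *+ k) = \sum_(j < m)
    (v j - (s j)%:~R + (k%:R - s0%:R) * ((l j)%:R / l0%:R)) *: rvec R (a j).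
Proof.
have -> : rvec R (u + a0 *+ k) =
    rvec R (u + a0 *+ s0) + (k%:R - s0%:R) *: rvec R a0.
  by rewrite !raddfD /= !rvecMn -addrA -scalerDl [s0%:R + _]addrC subrK.
rewrite coord_s0 rvec_a0 scaler_sumr -big_split /=.
by apply: eq_bigr => j _; rewrite scalerA -scalerDl.
Qed.

Lemma cone_s_le0 :
  (exists c : 'I_m -> R, (forall j, 0 <= c j) /\
     rvec R u = \sum_(j < m) c j *: rvec R (a j)) ->
  (forall j, v j < 1) -> forall j, s j <= 0.
Proof.
move=> [c [c_ge0 uE]] v_lt1 j.
have u_s0E : rvec R (u + a0 *+ s0) =
    \sum_(j < m) (c j + s0%:R * ((l j)%:R / l0%:R)) *: rvec R (a j).
  rewrite raddfD /= rvecMn uE rvec_a0 scaler_sumr -big_split /=.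
  by apply: eq_bigr => i _; rewrite scalerA -scalerDl.
have coord_ge0 : 0 <= v j - (s j)%:~R.
  rewrite -(free_coord_eq freeA (etrans (esym u_s0E) coord_s0) j).
  by apply: addr_ge0 => //; rewrite mulr_ge0 ?divr_ge0.
have : (s j)%:~R < 1 :> R by have := v_lt1 j; lra.
by rewrite ltrz1 -[1]add0r ltzD1.
Qed.

Hypothesis s0_lt : (s0 < l0)%N.
Hypothesis s_le0 : forall j, s j <= 0.

(* Comparing coordinates gives (k - s0) l_j = (s_j - t_j) l0 for every j, so
   l0 divides k - s0 because it is coprime to the gcd of the l_j. *)
Lemma shift_support (k : nat) (t : 'I_m -> int) :
  rvec R (u + a0 *+ k) = \sum_(j < m) (v j - (t j)%:~R) *: rvec R (a j) ->
  (s0 <= k)%N && (l0 %| k - s0)%N.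
Proof.
move=> wE.
have coordE j : ((k%:Z - s0%:Z) * (l j)%:Z) = (s j - t j) * l0%:Z.
  have E := free_coord_eq freeA (etrans (esym (rvec_shift k)) wE) j.
  have {}E : (k%:R - s0%:R) * ((l j)%:R / l0%:R) = (s j - t j)%:~R :> R.
    by rewrite intrB; lra.
  by apply: (@intr_inj R); rewrite !intrM -E intrB; field.
have dvd_dist : (l0 %| `|k%:Z - s0%:Z|)%N.
  apply: (Gauss_dvdl_big_gcdn coprime_l) => j; apply/dvdnP.
  by exists `|s j - t j|%N; have := congr1 absz (coordE j); rewrite !abszM.
have s0_le_k : (s0 <= k)%N.
  rewrite leqNgt; apply/negP => k_lt.
  have := dvdn_leq _ dvd_dist; lia.
have -> : (k - s0)%N = `|k%:Z - s0%:Z|%N by lia.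
by rewrite s0_le_k.
Qed.

Lemma Gser_out (k : nat) : ~~ ((s0 <= k)%N && (l0 %| k - s0)%N) ->
  Gser a0 a l0 l v u k = 0.
Proof.
move=> /negP k_out; rewrite /Gser gcoef_out ?mul0r // => -[t [_ wE]].
exact/k_out/(shift_support wE).
Qed.

Lemma Gser_period (e : nat) :
  Gser a0 a l0 l v u (s0 + e * l0)%N =
  (\prod_(j < m) bracket (- v j) (s j)) * (\prod_(j < m) (l j)%:R ^ (s j)) *
  ((- l0%:R) ^+ s0 / s0`!%:R) *
  ((\prod_(j < m) \prod_(i < l j) poch ((v j - (s j)%:~R + i%:R) / (l j)%:R) e)
   / \prod_(i < l0) poch ((s0 + i.+1)%:R / l0%:R) e).
Proof.
have t_le0 j : s j - (e * l j)%N%:Z <= 0 by have := s_le0 j; lia.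
have coordE : rvec R (u + a0 *+ (s0 + e * l0)%N) = \sum_(j < m)
    (v j - (s j - (e * l j)%N%:Z)%:~R) *: rvec R (a j).
  rewrite rvec_shift; apply: eq_bigr => j _; congr (_ *: _).
  rewrite intrB natrD natrM -[(_ * l j)%N%:Z%:~R]/((e * l j)%N%:R) natrM.
  by field.
rewrite /Gser (gcoefE l freeA t_le0 coordE).
under eq_bigr => j _ do rewrite bracket_shift //.
rewrite !big_split /= prodrXr -big_distrr /= -l0_sum -mulrA exp_fact_shift //.
have sign2 : (-1) ^+ (e * l0) * (-1) ^+ (e * l0) = 1 :> R.
  by rewrite -exprD -signr_odd oddD addbb.
move: sign2; set sg := (-1) ^+ (e * l0) => sign2.
set C := _ ^+ s0 / _.
by rewrite -[RHS]mul1r -sign2; ring.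
Qed.

Lemma GserE (k : nat) :
  Gser a0 a l0 l v u k =
  (\prod_(j < m) bracket (- v j) (s j)) * (\prod_(j < m) (l j)%:R ^ (s j)) *
  ((- l0%:R) ^+ s0 / s0`!%:R) * Fser l0 l v s0 s k.
Proof.
rewrite /Fser; case: ifPn => [/andP[s0_le_k dvd_k] | k_out]; last first.
  by rewrite Gser_out ?mulr0.
set e := ((k - s0) %/ l0)%N.
have -> : k = (s0 + e * l0)%N by rewrite divnK // subnKC.
exact: Gser_period.
Qed.

End Shift.

Theorem theorem4p7 (R : realType) (n m : nat)
    (a : 'I_m -> 'rV[int]_n) (a0 : 'rV[int]_n)
    (l0 : nat) (l : 'I_m -> nat)
    (* A = {a_1,...,a_m} linearly independent over R *)
    (Hfree : free [seq rvec R (a j) | j <- enum 'I_m])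
    (Hl0 : (0 < l0)%N) (Hl : forall j, (0 < l j)%N)
    (Hgcd : gcdn l0 (\big[gcdn/0%N]_(j < m) l j) = 1%N)
    (Hrel : a0 *+ l0 = \sum_(j < m) a j *+ l j)
    (Hsum : l0 = (\sum_(j < m) l j)%N)
    (* b in B, b = \sum_j v_j a_j with v_j in [0,1) *)
    (b : 'rV[int]_n) (v : 'I_m -> R)
    (Hv : forall j, 0 <= v j < 1)
    (Hb : rvec R b = \sum_(j < m) v j *: rvec R (a j))
    (* u in M = V_Z \cap C(A) *)
    (u : 'rV[int]_n)
    (Hu : exists c : 'I_m -> R, (forall j, 0 <= c j) /\
            rvec R u = \sum_(j < m) c j *: rvec R (a j))
    (* u - b in Z A_+ *)
    (Hub : exists (k0 : int) (k : 'I_m -> int),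
            u - b = a0 *~ k0 + \sum_(j < m) a j *~ k j)
    (* s0 in {0,...,l0-1} and s_1..s_m in Z with u + s0 a0 = b - \sum_j s_j a_j *)
    (s0 : nat) (s : 'I_m -> int)
    (Hs0 : (s0 < l0)%N)
    (Hs : u + a0 *+ s0 = b - \sum_(j < m) a j *~ s j) :
  Gser a0 a l0 l v u =
  (fun k => ((\prod_(j < m) bracket (- v j) (s j)) *
             (\prod_(j < m) (l j)%:R ^ (s j))) *
            ((- l0%:R) ^+ s0 / s0`!%:R) * Fser l0 l v s0 s k).
Proof.
have coord_s0 :
    rvec R (u + a0 *+ s0) = \sum_(j < m) (v j - (s j)%:~R) *: rvec R (a j).
  rewrite Hs raddfB raddf_sum /= Hb -sumrB.
  by apply: eq_bigr => j _; rewrite rvecMz scalerBl.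
have coprime_l : coprime l0 (\big[gcdn/0%N]_(j < m) l j) by apply/eqP.
have s_le0 := cone_s_le0 Hfree Hl0 Hrel coord_s0 Hu (fun j => (andP (Hv j)).2).
by apply: funext => k; apply: GserE.
Qed.
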